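(* For every fixed $C\in\mathbb C$ there exists a unique formal series $\rho\in\mathbb C[[\zeta^{-1}]]$ satisfying $$2\zeta^3\rho'''+3\zeta^2\rho''-2\zeta(\zeta-2C)\rho'-2C\rho=0,\qquad\rho(\infty)=1,$$ where $'=d/d\zeta$ and $\rho(\infty)$ is the constant term. Moreover $\rho\in\mathbb Q[C][[\zeta^{-1}]]$ and $\rho$ satisfies $$\zeta\rho'^2+\Bigl(1-\frac{2C}\zeta\Bigr)\rho^2-\rho\rho'-2\zeta\rho\rho''=1.$$ *)

From HB Require Import structures.
From mathcomp Require Import all_boot all_order all_algebra.
From mathcomp Require Import complex.
From mathcomp Require Import Rstruct.
Set Implicit Arguments. Unset Strict Implicit. Unset Printing Implicit Defensive.
Import Order.TTheory GRing.Theory Num.Theory.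
Local Open Scope ring_scope.

Definition CC : Type := complex Rdefinitions.R.
Check (CC : numClosedFieldType).

(* A formal series in zeta^{-1}: coefficient sequence a, rho = sum_n a n * zeta^(-n). *)
Definition fps (K : Type) := nat -> K.

(* Laurent series in zeta^{-1}: coefficient of zeta^m for m : int. Only used to
   state identities; elements of C[[zeta^{-1}]] embed with coefficient 0 at m > 0. *)
Definition lser (K : Type) := int -> K.

Section Ops.
Variable K : comPzRingType.

Definition emb (a : fps K) : lser K :=
  fun m => match m with Posz 0 => a 0%N | Posz _ => 0 | Negz k => a k.+1 end.

(* d/dzeta : zeta^(-n) |-> -n zeta^(-n-1) *)
Definition fderiv (a : fps K) : fps K :=
  fun n => match n with 0%N => 0 | k.+1 => - (k%:R * a k) end.

Definition fmul (a b : fps K) : fps K :=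
  fun n => \sum_(i < n.+1) a i * b (n - i)%N.

Definition fconst (c : K) : fps K := fun n => if n is 0%N then c else 0.

Definition ladd (f g : lser K) : lser K := fun m => f m + g m.
Definition lscale (c : K) (f : lser K) : lser K := fun m => c * f m.
Definition lmulz (f : lser K) : lser K := fun m => f (m - 1).
Definition lmulzinv (f : lser K) : lser K := fun m => f (m + 1).
End Ops.

Section Eqs.
Variable K : comPzRingType.
Variables (C : K) (rho : fps K).
Local Notation d1 := (fderiv rho).
Local Notation d2 := (fderiv (fderiv rho)).
Local Notation d3 := (fderiv (fderiv (fderiv rho))).

Definition ode_lhs : lser K :=
  ladd (lscale 2 (lmulz (lmulz (lmulz (emb d3)))))
  (ladd (lscale 3 (lmulz (lmulz (emb d2))))
  (ladd (lscale (-2) (lmulz (ladd (lmulz (emb d1)) (lscale (- (2 * C)) (emb d1)))))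
        (lscale (- (2 * C)) (emb rho)))).

Definition quad_lhs : lser K :=
  ladd (lmulz (emb (fmul d1 d1)))
  (ladd (ladd (emb (fmul rho rho)) (lscale (- (2 * C)) (lmulzinv (emb (fmul rho rho)))))
  (ladd (lscale (-1) (emb (fmul rho d1)))
        (lscale (-2) (lmulz (emb (fmul rho d2)))))).
End Eqs.

Definition lzero (K : comPzRingType) : lser K := fun _ => 0.

From HB Require Import structures.
From mathcomp Require Import all_boot all_order all_algebra.
From mathcomp Require Import complex Rstruct ring.
From Stdlib Require Import FunctionalExtensionality.
Set Implicit Arguments. Unset Strict Implicit. Unset Printing Implicit Defensive.
Import GRing.Theory Num.Theory.
Local Open Scope ring_scope.

(* Writing rho = sum_n a_n zeta^-n, the differential equation is equivalent to
   the first-order recurrence 2(n+1) a_(n+1) = (2n+1)(n(n+1) + 2C) a_n, which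
   determines rho from a_0 = 1 and makes a_n a polynomial in C over Q.
   In the quadratic identity the nonnegative powers of zeta only contribute a_0^2.
   The coefficient of zeta^-(k+1), multiplied by k+1, is rewritten with the
   recurrence via (k+1) sum_(i+j=k+1) a_i a_j = 2 sum_(i+j=k) (j+1) a_i a_(j+1);
   it becomes sum_(i+j=k) (i-j)(ij-2C) a_i a_j, which vanishes by antisymmetry. *)

Section SeriesAlgebra.
Variable K : comPzRingType.
Implicit Types a u v : fps K.

Definition fshift u : fps K := fun n => if n is k.+1 then u k else 0.

Lemma sum_ord_rev n (G : nat -> K) :
  \sum_(i < n.+1) G i = \sum_(i < n.+1) G (n - i)%N.
Proof. by rewrite (reindex_inj rev_ord_inj) /=; apply: eq_bigr => i _; rewrite subSS. Qed.

Lemma fmulC u v n : fmul u v n = fmul v u n.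
Proof.
rewrite /fmul (sum_ord_rev n (fun i => u i * v (n - i)%N)); apply: eq_bigr => i _.
by rewrite subKn 1?mulrC // -ltnS.
Qed.

Lemma fmul_shiftl u v n : fmul (fshift u) v n.+1 = fmul u v n.
Proof. by rewrite /fmul big_ord_recl mul0r add0r. Qed.

Lemma fmul_shiftr u v n : fmul u (fshift v) n.+1 = fmul u v n.
Proof. by rewrite fmulC fmul_shiftl fmulC. Qed.

Lemma fderivE u : fderiv u = fshift (fun n => - (n%:R * u n)).
Proof. by apply: functional_extensionality => -[|n]. Qed.

Lemma fderiv_shift u :
  fderiv (fshift u) = fshift (fshift (fun n => - (n.+1%:R * u n))).
Proof. by apply: functional_extensionality => -[|[|n]] //=; rewrite mul0r oppr0. Qed.

Lemma mulrn_fmul_sqr a k :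
  k%:R * fmul a a k = fmul a (fun n => n%:R * a n) k *+ 2.
Proof.
have sym : fmul (fun n => n%:R * a n) a k = fmul a (fun n => n%:R * a n) k.
  by rewrite fmulC.
rewrite mulr2n -{1}sym /fmul mulr_sumr -big_split /=.
apply: eq_bigr => i _; have le_ik : (i <= k)%N by rewrite -ltnS.
by rewrite -{1}(subnKC le_ik) natrD; ring.
Qed.

Lemma emb_eq0 u : emb u = lzero K <-> forall n, u n = 0.
Proof.
split=> [u0 [|n] | u0]; first exact: (congr1 (@^~ (Posz 0)) u0).
  exact: (congr1 (@^~ (Negz n)) u0).
by apply: functional_extensionality => -[[|n]|n] /=.
Qed.

Lemma emb_NegzD1 u k : emb u (Negz k + 1) = u k.
Proof. by case: k => //= k; rewrite subn1. Qed.

End SeriesAlgebra.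

Section Coefficients.
Variables (K : comPzRingType) (C : K).
Implicit Types a : fps K.

Definition rec_factor (n : nat) : K :=
  (2 * n%:R + 1) * (n%:R * n.+1%:R + 2 * C).

Definition solves_rec a : Prop :=
  forall n, 2 * n.+1%:R * a n.+1 = rec_factor n * a n.

Lemma ode_lhsE a :
  ode_lhs C a = emb (fun n => 2 * n.+1%:R * a n.+1 - rec_factor n * a n).
Proof.
rewrite /ode_lhs /ladd /lscale /lmulz /rec_factor.
apply: functional_extensionality => -[[|[|[|[|k]]]]|k] /=;
  rewrite ?(subnn, subn0, sub0n, addn0, add0n); ring.
Qed.

Lemma ode_lhs_eq0P a : ode_lhs C a = lzero K <-> solves_rec a.
Proof.
rewrite ode_lhsE emb_eq0; split=> rec n; first exact/subr0_eq/rec.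
by rewrite rec subrr.
Qed.

Lemma quad_lhs_Posz a n : quad_lhs C a (Posz n) = fconst (a 0%N ^+ 2) n.
Proof.
rewrite /quad_lhs /ladd /lscale /lmulz /lmulzinv /fmul.
case: n => [|[|n]] /=; rewrite ?big_ord_recr ?big_ord0 /=;
  rewrite ?(subnn, subn0, sub0n, addn0, add0n); ring.
Qed.

Lemma natr_fmul_sqr_rec a k : solves_rec a ->
  k.+1%:R * fmul a a k.+1 = \sum_(i < k.+1) rec_factor (k - i) * (a i * a (k - i)%N).
Proof.
move=> rec; rewrite mulrn_fmul_sqr.
have -> : (fun n => n%:R * a n) = fshift (fun n => n.+1%:R * a n.+1).
  by apply: functional_extensionality => -[|n] /=; rewrite ?mul0r.
rewrite fmul_shiftr /fmul -mulr_natl mulr_sumr; apply: eq_bigr => i _.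
by rewrite mulrCA [2 * _]mulrA rec mulrCA.
Qed.

Definition quad_kernel (i j : nat) : K := (i%:R - j%:R) * (i%:R * j%:R - 2 * C).

Lemma quad_lhs_Negz a k : solves_rec a ->
  k.+1%:R * quad_lhs C a (Negz k) =
  \sum_(i < k.+1) quad_kernel i (k - i) * (a i * a (k - i)%N).
Proof.
move=> rec; rewrite /quad_lhs /ladd /lscale /lmulz /lmulzinv /= addn0 emb_NegzD1.
rewrite fderivE fderiv_shift !fmul_shiftl !fmul_shiftr.
rewrite !mulrDr (natr_fmul_sqr_rec _ rec) /fmul !mulr_sumr -!big_split /=.
apply: eq_bigr => i _; have le_ik : (i <= k)%N by rewrite -ltnS.
have -> : k.+1%:R = (i + (k - i)).+1%:R :> K by rewrite subnKC.
rewrite /quad_kernel /rec_factor.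
move: (k - i)%N => j; ring.
Qed.

End Coefficients.

Arguments rec_factor : simpl never.

Section CharacteristicZero.
Variables (K : numDomainType) (C : K).
Implicit Types a b : fps K.

Lemma sum_antisym_eq0 n (G : nat -> nat -> K) :
  (forall i j, G i j = - G j i) -> \sum_(i < n.+1) G i (n - i)%N = 0.
Proof.
move=> antiG; set S := (X in X = 0).
have : S = - S.
  rewrite {1}/S (sum_ord_rev n (fun i => G i (n - i)%N)) -sumrN.
  by apply: eq_bigr => i _; rewrite subKn 1?antiG // -ltnS.
by move/eqP; rewrite -subr_eq0 opprK -mulr2n mulrn_eq0 => /eqP.
Qed.

Lemma quad_lhs_rec a : solves_rec C a -> quad_lhs C a = emb (fconst (a 0%N ^+ 2)).
Proof.
move=> rec; apply: functional_extensionality => -[n|k]; first exact: quad_lhs_Posz.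
apply: (@mulfI _ k.+1%:R); first by rewrite pnatr_eq0.
rewrite quad_lhs_Negz // mulr0.
rewrite (@sum_antisym_eq0 k (fun i j => quad_kernel C i j * (a i * a j))) //.
by move=> i j; rewrite /quad_kernel [a j * _]mulrC; ring.
Qed.

Lemma solves_rec_unique a b :
  solves_rec C a -> solves_rec C b -> a 0%N = b 0%N -> a = b.
Proof.
move=> rec_a rec_b ab0; apply: functional_extensionality.
elim=> [|n IHn] //; apply: (@mulfI _ (2 * n.+1%:R)).
  by rewrite mulf_neq0 ?pnatr_eq0.
by rewrite rec_a rec_b IHn.
Qed.

End CharacteristicZero.

Lemma rmorph_rec_factor (R S : comPzRingType) (f : {rmorphism R -> S}) x n :
  f (rec_factor x n) = rec_factor (f x) n.
Proof. by rewrite /rec_factor !(rmorphM, rmorphD, rmorph_nat, rmorph1). Qed.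

Lemma horner_rec_factor (R : comNzRingType) (x : R) n :
  (rec_factor 'X n).[x] = rec_factor x n.
Proof. by rewrite -horner_evalE rmorph_rec_factor /= horner_evalE hornerX. Qed.

Fixpoint rho_poly (n : nat) : {poly rat} :=
  if n is k.+1 then ((2 * k.+1%:R)^-1)%:P * rec_factor 'X k * rho_poly k else 1.

Lemma rho_polyS n :
  rho_poly n.+1 = ((2 * n.+1%:R)^-1)%:P * rec_factor 'X n * rho_poly n.
Proof. by []. Qed.

Definition rho_coef (K : numFieldType) (C : K) (n : nat) : K :=
  (map_poly ratr (rho_poly n)).[C].

Lemma rho_coef0 (K : numFieldType) (C : K) : rho_coef C 0 = 1.
Proof. by rewrite /rho_coef rmorph1 hornerC. Qed.

Lemma rho_coef_rec (K : numFieldType) (C : K) : solves_rec C (rho_coef C).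
Proof.
move=> n; rewrite /rho_coef rho_polyS 2!rmorphM /= 2!hornerM map_polyC hornerC.
rewrite (rmorph_rec_factor (map_poly ratr)) /= map_polyX horner_rec_factor.
rewrite fmorphV rmorphM !rmorph_nat.
by rewrite !mulrA mulfV ?mul1r // mulf_neq0 ?pnatr_eq0.
Qed.

Theorem proposition4p1 (C : CC) :
  exists rho : fps CC,
    ((ode_lhs C rho = lzero CC /\ rho 0%N = 1) /\
     (forall sigma : fps CC,
        ode_lhs C sigma = lzero CC /\ sigma 0%N = 1 -> sigma = rho)) /\
    (exists p : nat -> {poly rat},
        forall n : nat, rho n = (map_poly (ratr : rat -> CC) (p n)).[C]) /\
    quad_lhs C rho = emb (fconst (1 : CC)).
Proof.
have rho_rec := rho_coef_rec C.
exists (rho_coef C); split; [split; [split|] | split].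
- exact/ode_lhs_eq0P.
- exact: rho_coef0.
- move=> sigma [/ode_lhs_eq0P sigma_rec sigma0].
  by apply: solves_rec_unique; rewrite ?sigma0 ?rho_coef0.
- by exists rho_poly.
- by rewrite quad_lhs_rec // rho_coef0 expr1n.
Qed.
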